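(* Let $R$ be a commutative ring. A map $p\colon E\to B$ of DG $R$-modules satisfies the enriched right lifting property against every map $S^{n-1}_R\to D^n_R$, $n\in\mathbb{Z}$, if and only if $p$ is a degreewise $R$-split epimorphism that is a chain homotopy equivalence.
   Context: DG $R$-modules are $\mathbb{Z}$-graded chain complexes of $R$-modules. $S^{n-1}_R$ is $R$ concentrated in degree $n-1$; $D^n_R$ is $R$ in degrees $n$ and $n-1$ with identity differential; $S^{n-1}_R\to D^n_R$ is the inclusion in degree $n-1$. For DG $R$-modules $M,N$, $\mathcal{M}_R(M,N)$ is the $R$-module of chain maps. For $i\colon W\to X$ and $p\colon E\to B$, $\underline{\mathrm{Sq}}(i,p)$ is the pullback of $R$-modules of $p_*\colon \mathcal{M}_R(W,E)\to \mathcal{M}_R(W,B)$ and $i^*\colon \mathcal{M}_R(X,B)\to\mathcal{M}_R(W,B)$. The map $p$ has the enriched right lifting property against $i$ if the induced map $\mathcal{M}_R(X,E)\to\underline{\mathrm{Sq}}(i,p)$ is a split epimorphism of $R$-modules. *)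

From HB Require Import structures.
From mathcomp Require Import all_boot all_order all_algebra.
Unset Printing Implicit Defensive.
Import Order.TTheory GRing.Theory Num.Theory.
Local Open Scope ring_scope.

Section DG.
Variable R : comPzRingType.

Definition linear_fun {U V : lmodType R} (f : U -> V) : Prop :=
  forall (a : R) (x y : U), f (a *: x + y) = a *: f x + f y.

(* The differential is
   encoded as a family d i j : M i -> M j which vanishes unless j = i - 1
   (so d i (i-1) is the genuine differential M_i -> M_{i-1}). *)
Record DGMod := DGModule {
  dg_obj :> int -> lmodType R;
  dg_d : forall i j : int, dg_obj i -> dg_obj j;
  dg_d_lin : forall i j, linear_fun (dg_d i j);
  dg_d_shape : forall i j x, j != i - 1 -> dg_d i j x = 0;
  dg_dd : forall i j k x, dg_d j k (dg_d i j x) = 0 }.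

Definition gmap (M N : DGMod) := forall k : int, M k -> N k.

Definition is_chain_map {M N : DGMod} (f : gmap M N) : Prop :=
  (forall k, linear_fun (f k)) /\
  (forall k l x, f l (dg_d M k l x) = dg_d N k l (f k x)).

Definition gadd {M N : DGMod} (f g : gmap M N) : gmap M N :=
  fun k x => f k x + g k x.
Definition gscale {M N : DGMod} (a : R) (f : gmap M N) : gmap M N :=
  fun k x => a *: f k x.

Definition in_sq {W X E B : DGMod} (i : gmap W X) (p : gmap E B)
  (u : gmap W E) (v : gmap X B) : Prop :=
  [/\ is_chain_map u, is_chain_map v & forall k x, p k (u k x) = v k (i k x)].

(* p has the enriched right lifting property against i: the R-linear map
   M(X,E) -> Sq(i,p), f |-> (f i, p f), admits an R-linear section s. *)
Definition enriched_rlp {W X E B : DGMod} (i : gmap W X) (p : gmap E B) : Prop :=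
  exists s : gmap W E -> gmap X B -> gmap X E,
    (forall u v, in_sq i p u v ->
       [/\ is_chain_map (s u v),
           (forall k x, s u v k (i k x) = u k x) &
           (forall k x, p k (s u v k x) = v k x)]) /\
    (forall (a : R) u v u' v', in_sq i p u v -> in_sq i p u' v' ->
       forall k x, s (gadd (gscale a u) u') (gadd (gscale a v) v') k x
                   = a *: s u v k x + s u' v' k x).

Definition degreewise_split_epi {E B : DGMod} (p : gmap E B) : Prop :=
  forall k, exists s : B k -> E k, linear_fun s /\ forall y, p k (s y) = y.

Definition gid (M : DGMod) : gmap M M := fun k x => x.
Definition gcomp {L M N : DGMod} (g : gmap M N) (f : gmap L M) : gmap L N :=
  fun k x => g k (f k x).

Definition chain_homotopic {M N : DGMod} (f g : gmap M N) : Prop :=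
  exists h : forall i j : int, M i -> N j,
    (forall i j, linear_fun (h i j)) /\
    (forall i j x, j != i + 1 -> h i j x = 0) /\
    (forall i x, f i x - g i x
                 = dg_d N (i + 1) i (h i (i + 1) x) + h (i - 1) i (dg_d M i (i - 1) x)).

Definition chain_htpy_equiv {M N : DGMod} (p : gmap M N) : Prop :=
  exists q : gmap N M, is_chain_map q /\
    chain_homotopic (gcomp q p) (gid M) /\ chain_homotopic (gcomp p q) (gid N).

(* Sphere S^m_R: R concentrated in degree m (free module 'rV_1, and 'rV_0 = 0
   elsewhere), zero differential. *)
Definition sphere_obj (m : int) (k : int) : lmodType R := 'rV[R]_(k == m).

Lemma sphere_d_lin m i j : linear_fun (fun _ : sphere_obj m i => (0 : sphere_obj m j)).
Proof. by move=> a x y; rewrite scaler0 addr0. Qed.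

Definition sphere (m : int) : DGMod :=
  @DGModule (sphere_obj m) (fun i j _ => 0) (@sphere_d_lin m)
    (fun _ _ _ _ => erefl) (fun _ _ _ _ => erefl).

(* Disk D^n_R: R in degrees n and n-1, differential the identity D_n -> D_{n-1}.
   conform_mx 0 x is x when the dimensions agree (both 1 here). *)
Definition disk_obj (n : int) (k : int) : lmodType R :=
  'rV[R]_((k == n) || (k == n - 1)).

(* the canonical map R^{m1} -> R^{m2}: identity if m1 = m2, zero otherwise *)
Definition cf {m1 m2 : nat} (x : 'rV[R]_m1) : 'rV[R]_m2 := conform_mx 0 x.

Definition disk_d (n : int) (i j : int) (x : disk_obj n i) : disk_obj n j :=
  if (i == n) && (j == n - 1)
  then (cf (x : 'rV[R]_((i == n) || (i == n - 1))) : disk_obj n j)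
  else 0.

Lemma conform_lin m1 n1 m2 n2 (a : R) (x y : 'M[R]_(m1, n1)) :
  conform_mx (0 : 'M[R]_(m2, n2)) (a *: x + y)
  = a *: conform_mx 0 x + conform_mx 0 y.
Proof.
case: (altP (m1 =P m2)) => [e1|ne1].
  case: (altP (n1 =P n2)) => [e2|ne2].
    by subst; rewrite !conform_mx_id.
  by rewrite !nonconform_mx ?ne2 ?orbT // scaler0 addr0.
by rewrite !nonconform_mx ?ne1 // scaler0 addr0.
Qed.

Lemma disk_d_lin n i j : linear_fun (@disk_d n i j).
Proof.
move=> a x y; rewrite /disk_d; case: ifP => _; first exact: conform_lin.
by rewrite scaler0 addr0.
Qed.

Lemma disk_d_shape n i j x : j != i - 1 -> @disk_d n i j x = 0.
Proof.
rewrite /disk_d => H; case: ifP => // /andP [/eqP Ei /eqP Ej]; exfalso.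
by move: H; rewrite Ej Ei eqxx.
Qed.

Lemma conform0 m1 n1 m2 n2 :
  conform_mx (0 : 'M[R]_(m2, n2)) (0 : 'M[R]_(m1, n1)) = 0.
Proof.
case: (altP (m1 =P m2)) => [e1|ne1].
  case: (altP (n1 =P n2)) => [e2|ne2].
    by subst; rewrite !conform_mx_id.
  by rewrite !nonconform_mx ?ne2 ?orbT.
by rewrite !nonconform_mx ?ne1.
Qed.

Lemma disk_dd n i j k x : @disk_d n j k (@disk_d n i j x) = 0.
Proof.
rewrite /disk_d; case: (boolP ((i == n) && (j == n - 1))) => [/andP [_ /eqP Ej]|_].
  case: ifP => // /andP [/eqP H _]; exfalso; move: H; rewrite Ej => /eqP.
  by rewrite -subr_eq0 addrAC subrr add0r oppr_eq0 oner_eq0.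
by case: ifP => // _; exact: conform0.
Qed.

Definition disk (n : int) : DGMod :=
  @DGModule (disk_obj n) (@disk_d n) (@disk_d_lin n) (@disk_d_shape n) (@disk_dd n).

Definition sphere_incl (n : int) : gmap (sphere (n - 1)) (disk n) :=
  fun k x => (cf (x : 'rV[R]_(k == n - 1)) : disk_obj n k).

End DG.

Arguments gmap {R} M N.
Arguments is_chain_map {R M N} f.
Arguments enriched_rlp {R W X E B} i p.
Arguments degreewise_split_epi {R E B} p.
Arguments chain_htpy_equiv {R M N} p.
Arguments chain_homotopic {R M N} f g.
Arguments sphere_incl {R} n.
Arguments sphere {R} m.
Arguments disk {R} n.

From HB Require Import structures.
From mathcomp Require Import all_boot all_order all_algebra.
From Stdlib Require Import ClassicalEpsilon FunctionalExtensionality.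
Import Order.TTheory GRing.Theory Num.Theory.
Local Open Scope ring_scope.

(* A chain map [S^(n-1) -> E] is a cycle [z], a chain map [D^n -> B] is an element
   [b], and a commutative square is such a pair with [p z = d b] (a relative cycle).
   So the enriched lifting property against [S^(n-1) -> D^n] amounts to an R-linear
   choice of [e] with [d e = z] and [p e = b] for every relative cycle [(z, b)].
   Given such lifts in all degrees, lifting [b] over the lift of [(0, d b)] gives a
   chain section [s] of [p], and lifting cycles of [ker p] contracts [s p - 1].
   Conversely, a homotopy inverse and a degreewise section yield such lifts by an
   explicit formula. *)

Section Lifting.
Variable R : comPzRingType.
Local Notation dd := (dg_d R).

Section LinearFun.
Context {U V : lmodType R} {f : U -> V}.
Hypothesis lin_f : linear_fun R f.

Lemma lin0 : f 0 = 0.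
Proof. by have := lin_f (-1) 0 0; rewrite scaler0 addr0 scaleN1r addNr. Qed.

Lemma linD x y : f (x + y) = f x + f y.
Proof. by have := lin_f 1 x y; rewrite !scale1r. Qed.

Lemma linZ a x : f (a *: x) = a *: f x.
Proof. by have := lin_f a x 0; rewrite lin0 !addr0. Qed.

Lemma linB x y : f (x - y) = f x - f y.
Proof. by rewrite linD -scaleN1r linZ scaleN1r. Qed.
End LinearFun.

Section Differential.
Variables (M : DGMod R) (i j : int).
Lemma dd0 : dd M i j 0 = 0. Proof. exact: (lin0 (dg_d_lin R M i j)). Qed.
Lemma ddD x y : dd M i j (x + y) = dd M i j x + dd M i j y.
Proof. exact: (linD (dg_d_lin R M i j)). Qed.
Lemma ddB x y : dd M i j (x - y) = dd M i j x - dd M i j y.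
Proof. exact: (linB (dg_d_lin R M i j)). Qed.
Lemma ddZ a x : dd M i j (a *: x) = a *: dd M i j x.
Proof. exact: (linZ (dg_d_lin R M i j)). Qed.
End Differential.

(* Unlike [eqVneq], case analysis on this does not rewrite the boolean [i == j],
   which occurs in the dimensions of the spheres and disks. *)
Lemma eq_or_neq {T : eqType} (i j : T) : i = j \/ i != j.
Proof. by case: eqVneq; [left|right]. Qed.

Lemma int_subr1_neq (n : int) : n - 1 != n.
Proof. by rewrite -subr_eq0 addrAC subrr add0r oppr_eq0 oner_eq0. Qed.

Lemma int_neq_subr1 (n : int) : n != n - 1.
Proof. by rewrite eq_sym int_subr1_neq. Qed.

(* Spheres and disks are built from ['rV_b] with [b : bool]: [rv1 true] generates
   ['rV_true], a free module of rank one, and [coef] is the coordinate on it. *)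
Definition rv1 (b : bool) : 'rV[R]_b := const_mx 1.
Definition coef {m} (y : 'rV[R]_m) : R := \sum_(i < m) y 0 i.

Lemma coef_lin m a (x y : 'rV[R]_m) : coef (a *: x + y) = a * coef x + coef y.
Proof. by rewrite /coef mulr_sumr -big_split; apply: eq_bigr => i _; rewrite !mxE. Qed.

Lemma coef0 m : coef (0 : 'rV[R]_m) = 0.
Proof. by rewrite /coef big1 // => i _; rewrite mxE. Qed.

Lemma coef_eq0 m (y : 'rV[R]_m) : y = 0 -> coef y = 0.
Proof. by move->; apply: coef0. Qed.

Lemma coef_rv1 (b : bool) : b -> coef (rv1 b) = 1.
Proof. by case: b => // _; rewrite /coef big_ord1 mxE. Qed.

Lemma rv_false {b : bool} (y : 'rV[R]_b) : ~~ b -> y = 0.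
Proof. by case: b y => y // _; apply/matrixP => i []. Qed.

Lemma coef_cf_false {b : bool} m (y : 'rV[R]_b) : ~~ b -> coef (cf R y : 'rV_m) = 0.
Proof.
case: b y => // y _; have -> : y = 0 by apply/matrixP => i [].
by rewrite /cf conform0 coef0.
Qed.

Lemma rv_true {b : bool} (y : 'rV[R]_b) : b -> y = coef y *: rv1 b.
Proof.
by case: b y => y // _; apply/matrixP => i j; rewrite !mxE /coef big_ord1 mulr1 !ord1.
Qed.

Lemma coef_cf m1 m2 (y : 'rV[R]_m1) : m1 = m2 -> coef (cf R y : 'rV_m2) = coef y.
Proof. by move=> e; subst; rewrite /cf conform_mx_id. Qed.

Lemma cf_rv1 (b1 b2 : bool) : b1 -> b2 -> cf R (rv1 b1) = rv1 b2.
Proof. by case: b1; case: b2 => // _ _; rewrite /cf conform_mx_id. Qed.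

Definition regrade (M : DGMod R) (i j : int) (x : M i) : M j :=
  match i =P j with ReflectT e => eq_rect i (fun k => M k : Type) x j e | ReflectF _ => 0 end.

Lemma regrade_id M i x : regrade M i i x = x.
Proof. by rewrite /regrade; case: eqP => // e; rewrite (eq_axiomK e). Qed.

Lemma regrade_ne M i j x : i != j -> regrade M i j x = 0.
Proof. by rewrite /regrade; case: eqP. Qed.

Lemma regradeP M i j x : i = j \/ regrade M i j x = 0.
Proof. by case: (eq_or_neq i j) => [|/regrade_ne ->]; [left|right]. Qed.

Lemma regrade_regrade M i j k x : i = j ->
  regrade M j k (regrade M i j x) = regrade M i k x.
Proof. by move=> e; subst; rewrite regrade_id. Qed.

Lemma regrade_lin M i j : linear_fun R (regrade M i j).
Proof.
move=> a x y; case: (eq_or_neq i j) => [<-|ne]; first by rewrite !regrade_id.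
by rewrite !regrade_ne // scaler0 addr0.
Qed.

Lemma regrade_map (M N : DGMod R) (g : gmap M N) i j x :
  linear_fun R (g i) -> linear_fun R (g j) ->
  g j (regrade M i j x) = regrade N i j (g i x).
Proof.
move=> lin_gi lin_gj; case: (eq_or_neq i j) => [<-|ne]; first by rewrite !regrade_id.
by rewrite !regrade_ne // lin0.
Qed.

Section SphereDiskMaps.
Variable M : DGMod R.

(* Chain maps [S^m -> M] are the cycles of degree [m] and chain maps [D^n -> M]
   are the elements of degree [n] ([sphere_mapE], [disk_mapE]). *)
Definition sphere_map {m : int} (z : M m) : gmap (sphere m) M :=
  fun k y => coef (y : 'rV_(k == m)) *: regrade M m k z.

Definition disk_map {n : int} (x : M n) : gmap (disk n) M :=
  fun k y => coef (y : 'rV_((k == n) || (k == n - 1))) *: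
    (regrade M n k x + regrade M (n - 1) k (dd M n (n - 1) x)).

Lemma sphere_map_chain m z : dd M m (m - 1) z = 0 -> is_chain_map (sphere_map z).
Proof.
move=> dz; split=> [k a x y|k l y]; first by rewrite /sphere_map coef_lin scalerDl scalerA.
rewrite /sphere_map /= coef0 scale0r ddZ.
case: (eq_or_neq m k) => [ek|nk]; last by rewrite regrade_ne // dd0 scaler0.
subst k; rewrite regrade_id; case: (eq_or_neq l (m - 1)) => [->|ne]; first by rewrite dz scaler0.
by rewrite dg_d_shape // scaler0.
Qed.

Lemma sphere_map_gen m z : sphere_map z m (rv1 (m == m)) = z.
Proof. by rewrite /sphere_map coef_rv1 ?eqxx // regrade_id scale1r. Qed.

Lemma sphere_mapE m (f : gmap (sphere m) M) : (forall k, linear_fun R (f k)) ->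
  forall k y, f k y = sphere_map (f m (rv1 (m == m))) k y.
Proof.
move=> lin_f k y; rewrite /sphere_map; case: (eq_or_neq k m) => [ek|ne].
  by subst k; rewrite regrade_id {1}(rv_true y (eqxx m)) linZ.
by rewrite (rv_false y) ?ne // coef0 scale0r lin0.
Qed.

Lemma disk_map_chain n x : is_chain_map (@disk_map n x).
Proof.
split=> [k a y y'|k l y]; first by rewrite /disk_map coef_lin scalerDl scalerA.
rewrite /disk_map /= ddZ.
case: (eq_or_neq l (k - 1)) => [->{l}|nl]; last first.
  by rewrite coef_eq0 ?disk_d_shape // (dg_d_shape _ _ _ _ _ nl) scale0r scaler0.
case: (eq_or_neq k n) => [ek|nk].
  subst k; rewrite /disk_d ifT ?eqxx // coef_cf; last by rewrite eqxx !orbT.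
  rewrite (regrade_ne _ _ _ _ (int_neq_subr1 n)) (regrade_ne _ _ _ _ (int_subr1_neq n)).
  by rewrite !regrade_id add0r addr0.
rewrite /disk_d ifF ?(negbTE nk) // coef_eq0 // scale0r.
rewrite [regrade M n k x]regrade_ne ?add0r; last by rewrite eq_sym.
case: (regradeP M (n - 1) k (dd M n (n - 1) x)) => [ek|->].
  by subst k; rewrite regrade_id dg_dd scaler0.
by rewrite dd0 scaler0.
Qed.

Lemma disk_map_gen n x : disk_map x n (rv1 ((n == n) || (n == n - 1))) = x.
Proof.
rewrite /disk_map coef_rv1 ?eqxx // scale1r regrade_id.
by rewrite regrade_ne ?int_subr1_neq // addr0.
Qed.

Lemma disk_d_rv1 n : disk_d R n n (n - 1) (rv1 ((n == n) || (n == n - 1)))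
  = rv1 ((n - 1 == n) || (n - 1 == n - 1)).
Proof. by rewrite /disk_d ifT ?eqxx // cf_rv1 ?eqxx ?orbT. Qed.

Lemma sphere_incl_rv1 n : sphere_incl n (n - 1) (rv1 (n - 1 == n - 1))
  = rv1 ((n - 1 == n) || (n - 1 == n - 1)).
Proof. by rewrite /sphere_incl cf_rv1 ?eqxx ?orbT. Qed.

Lemma disk_mapE n (f : gmap (disk n) M) : is_chain_map f ->
  forall k y, f k y = disk_map (f n (rv1 ((n == n) || (n == n - 1)))) k y.
Proof.
move=> [lin_f chain_f] k y; rewrite /disk_map; case: (eq_or_neq k n) => [ek|nk].
  subst k; rewrite regrade_id regrade_ne ?int_subr1_neq // addr0.
  by rewrite {1}(rv_true y) ?eqxx // linZ.
rewrite [regrade M n k _]regrade_ne ?add0r; last by rewrite eq_sym.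
case: (eq_or_neq k (n - 1)) => [ek|nk1].
  subst k; rewrite regrade_id -chain_f /= disk_d_rv1.
  by rewrite {1}(rv_true y) ?eqxx ?orbT // linZ.
by rewrite (rv_false y) ?negb_or ?nk ?nk1 // coef0 scale0r lin0.
Qed.

Lemma disk_map_incl n x k y :
  disk_map x k (sphere_incl n k y) = sphere_map (dd M n (n - 1) x) k y.
Proof.
rewrite /disk_map /sphere_map /sphere_incl; case: (eq_or_neq k (n - 1)) => [ek|nk].
  subst k; rewrite coef_cf; last by rewrite eqxx orbT.
  by rewrite regrade_ne ?int_neq_subr1 // add0r.
by rewrite coef_cf_false // (rv_false y) // coef0 !scale0r.
Qed.

End SphereDiskMaps.
Arguments sphere_map {M m}.
Arguments disk_map {M n}.

Lemma map_sphere_map (M N : DGMod R) (g : gmap M N) m z k y :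
  (forall k, linear_fun R (g k)) ->
  g k (sphere_map z k y) = sphere_map (g m z) k y.
Proof. by move=> lin_g; rewrite /sphere_map linZ // regrade_map. Qed.

Lemma map_disk_map (M N : DGMod R) (g : gmap M N) n x k y : is_chain_map g ->
  g k (disk_map x k y) = disk_map (g n x) k y.
Proof.
move=> [lin_g chain_g]; rewrite /disk_map linZ // linD //.
by rewrite !regrade_map // chain_g.
Qed.

Lemma sphere_map_lin (M : DGMod R) m a (z z' : M m) :
  sphere_map (a *: z + z') = gadd R (gscale R a (sphere_map z)) (sphere_map z').
Proof.
apply: functional_extensionality_dep => k; apply: functional_extensionality => y.
by rewrite /gadd /gscale /sphere_map regrade_lin scalerDr !scalerA mulrC.
Qed.

Lemma disk_map_lin (M : DGMod R) n a (x x' : M n) :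
  disk_map (a *: x + x') = gadd R (gscale R a (disk_map x)) (disk_map x').
Proof.
apply: functional_extensionality_dep => k; apply: functional_extensionality => y.
rewrite /gadd /gscale /disk_map dg_d_lin !regrade_lin !scalerA mulrC -!scalerA.
by rewrite -scalerDr addrACA -scalerDr.
Qed.

Definition jointly_linear {U1 U2 V : lmodType R} (F : U1 -> U2 -> V) : Prop :=
  forall a z b z' b', F (a *: z + z') (a *: b + b') = a *: F z b + F z' b'.

Section JointlyLinear.
Context {U1 U2 V W : lmodType R}.

Lemma jointly_linear_fst {f : U1 -> V} :
  linear_fun R f -> jointly_linear (fun z (_ : U2) => f z).
Proof. by move=> lin_f a z b z' b'; rewrite lin_f. Qed.

Lemma jointly_linear_snd {f : U2 -> V} :
  linear_fun R f -> jointly_linear (fun (_ : U1) b => f b).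
Proof. by move=> lin_f a z b z' b'; rewrite lin_f. Qed.

Lemma jointly_linearD {F F' : U1 -> U2 -> V} : jointly_linear F -> jointly_linear F' ->
  jointly_linear (fun z b => F z b + F' z b).
Proof. by move=> lin_F lin_F' a z b z' b'; rewrite lin_F lin_F' scalerDr addrACA. Qed.

Lemma jointly_linearB {F F' : U1 -> U2 -> V} : jointly_linear F -> jointly_linear F' ->
  jointly_linear (fun z b => F z b - F' z b).
Proof.
by move=> lin_F lin_F' a z b z' b'; rewrite lin_F lin_F' scalerBr opprD addrACA.
Qed.

Lemma jointly_linear_comp {f : V -> W} {F : U1 -> U2 -> V} :
  linear_fun R f -> jointly_linear F -> jointly_linear (fun z b => f (F z b)).
Proof. by move=> lin_f lin_F a z b z' b'; rewrite lin_F lin_f. Qed.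
End JointlyLinear.

Section RelativeCycles.
Variables (E B : DGMod R) (p : gmap E B).
Hypothesis chain_p : is_chain_map p.

(* Relative cycles of degree [n] are the elements of [Sq(S^(n-1) -> D^n, p)]. *)
Definition relative_cycle {n} (z : E (n - 1)) (b : B n) : Prop :=
  dd E (n - 1) (n - 1 - 1) z = 0 /\ p (n - 1) z = dd B n (n - 1) b.

Definition relative_cycle_lift n (l : E (n - 1) -> B n -> E n) : Prop :=
  (forall z b, relative_cycle z b -> dd E n (n - 1) (l z b) = z /\ p n (l z b) = b) /\
  (forall a z b z' b', relative_cycle z b -> relative_cycle z' b' ->
     l (a *: z + z') (a *: b + b') = a *: l z b + l z' b').

Lemma relative_cycle_in_sq {n z b} : @relative_cycle n z b ->
  in_sq R (sphere_incl n) p (sphere_map z) (disk_map b).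
Proof.
move=> [dz pz]; split; [exact: sphere_map_chain | exact: disk_map_chain |].
by move=> k y; rewrite disk_map_incl map_sphere_map ?pz //; case: chain_p.
Qed.

Lemma in_sq_relative_cycle {n u v} : in_sq R (sphere_incl n) p u v ->
  relative_cycle (u (n - 1) (rv1 (n - 1 == n - 1))) (v n (rv1 ((n == n) || (n == n - 1)))).
Proof.
move=> [[lin_u chain_u] [_ chain_v] sq]; split.
  by rewrite -(chain_u (n - 1)) /= (lin0 (lin_u _)).
by rewrite sq sphere_incl_rv1 -disk_d_rv1 -chain_v.
Qed.

Lemma enriched_rlp_relative_cycle_lift n :
  enriched_rlp (sphere_incl n) p <-> exists l, relative_cycle_lift n l.
Proof.
split=> [[s [s_lift s_lin]]|[l [l_lift l_lin]]].
  exists (fun z b => s (sphere_map z) (disk_map b) n (rv1 ((n == n) || (n == n - 1)))).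
  split=> [z b zb|a z b z' b' zb zb'].
    have [[_ chain_s] s_incl s_p] := s_lift _ _ (relative_cycle_in_sq zb).
    rewrite -chain_s /= disk_d_rv1 -sphere_incl_rv1 s_incl s_p.
    by rewrite sphere_map_gen disk_map_gen.
  by rewrite sphere_map_lin disk_map_lin s_lin //; apply: relative_cycle_in_sq.
exists (fun (u : gmap (sphere (n - 1)) E) (v : gmap (disk n) B) =>
  disk_map (l (u (n - 1) (rv1 (n - 1 == n - 1))) (v n (rv1 ((n == n) || (n == n - 1)))))).
split=> [u v uv|a u v u' v' uv uv' k y].
  have [dl pl] := l_lift _ _ (in_sq_relative_cycle uv).
  have [[lin_u _] chain_v _] := uv.
  split=> [|k y|k y]; first exact: disk_map_chain.
    by rewrite disk_map_incl dl -sphere_mapE.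
  by rewrite map_disk_map // pl -disk_mapE.
by rewrite /gadd /gscale l_lin ?disk_map_lin //; apply: in_sq_relative_cycle.
Qed.

Lemma relative_cycle0 n : @relative_cycle n 0 0.
Proof. by rewrite /relative_cycle dd0 dd0 (lin0 (chain_p.1 _)). Qed.

Section SectionFromLifts.
Variable l : forall n, E (n - 1) -> B n -> E n.
Hypothesis l_lift : forall n, relative_cycle_lift n (l n).

Section FixedDegree.
Variables (n : int) (z : E (n - 1)) (b : B n).
Hypothesis zb : relative_cycle z b.

Lemma lift_d : dd E n (n - 1) (l n z b) = z.
Proof. exact: ((l_lift n).1 _ _ zb).1. Qed.

Lemma lift_p : p n (l n z b) = b.
Proof. exact: ((l_lift n).1 _ _ zb).2. Qed.

Lemma lift_dd m : dd E n m (l n z b) = regrade E (n - 1) m z.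
Proof.
case: (eq_or_neq (n - 1) m) => [<-|nm]; first by rewrite regrade_id lift_d.
by rewrite regrade_ne // dg_d_shape // eq_sym.
Qed.
End FixedDegree.
Arguments lift_d {n z b}.
Arguments lift_p {n z b}.
Arguments lift_dd {n z b}.

Lemma lift_lin {n} a {z b z' b'} : relative_cycle z b -> relative_cycle z' b' ->
  l n (a *: z + z') (a *: b + b') = a *: l n z b + l n z' b'.
Proof. exact: (l_lift n).2. Qed.

Lemma lift00 n : l n 0 0 = 0.
Proof.
have := lift_lin (-1) (relative_cycle0 n) (relative_cycle0 n).
by rewrite !scaler0 !addr0 scaleN1r addNr.
Qed.

Lemma lift_lin0 {n} a {z z'} : relative_cycle z 0 -> relative_cycle z' 0 ->
  l n (a *: z + z') 0 = a *: l n z 0 + l n z' 0.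
Proof. by move=> zb zb'; rewrite -(lift_lin a zb zb') scaler0 addr0. Qed.

(* [l (k - 1) 0 (d b)] lifts the boundary of [b]; lifting [b] along it gives a
   section of [p] that commutes with the differentials. *)
Definition boundary_lift {k} (b : B k) : E (k - 1) := l (k - 1) 0 (dd B k (k - 1) b).
Definition chain_section {k} (b : B k) : E k := l k (boundary_lift b) b.

Lemma relative_cycle0_dd {k} (b : B k) :
  relative_cycle (0 : E (k - 1 - 1)) (dd B k (k - 1) b).
Proof. by rewrite /relative_cycle dd0 (lin0 (chain_p.1 _)) dg_dd. Qed.

Lemma boundary_lift_relative {k} (b : B k) : relative_cycle (boundary_lift b) b.
Proof.
by split; [apply: (lift_d (relative_cycle0_dd b)) | apply: (lift_p (relative_cycle0_dd b))].
Qed.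

Lemma chain_section_p k (b : B k) : p k (chain_section b) = b.
Proof. exact: (lift_p (boundary_lift_relative b)). Qed.

Lemma chain_section_lin k : linear_fun R (@chain_section k).
Proof.
move=> a b b'; rewrite /chain_section.
have -> : boundary_lift (a *: b + b') = a *: boundary_lift b + boundary_lift b'.
  rewrite /boundary_lift dg_d_lin -(lift_lin a (relative_cycle0_dd b) (relative_cycle0_dd b')).
  by rewrite scaler0 addr0.
exact: lift_lin (boundary_lift_relative b) (boundary_lift_relative b').
Qed.

Lemma chain_section_chain k j (b : B k) :
  chain_section (dd B k j b) = dd E k j (chain_section b).
Proof.
case: (eq_or_neq j (k - 1)) => [->|nj]; last first.
  by rewrite !dg_d_shape // (lin0 (chain_section_lin _)).
rewrite {2}/chain_section (lift_d (boundary_lift_relative b)).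
by rewrite /chain_section /boundary_lift dg_dd lift00.
Qed.

(* The defect [s p x - x] lies in [ker p]; correcting it by the lift of its
   boundary makes it a cycle of [ker p], and lifting that cycle contracts it. *)
Definition section_defect {i} (x : E i) : E i := chain_section (p i x) - x.

Lemma section_defect_lin i : linear_fun R (@section_defect i).
Proof.
move=> a x y; rewrite /section_defect chain_p.1 chain_section_lin.
by rewrite opprD scalerBr addrACA.
Qed.

Lemma section_defect_d i j (x : E i) :
  dd E i j (section_defect x) = section_defect (dd E i j x).
Proof. by rewrite /section_defect ddB -chain_section_chain chain_p.2. Qed.

Lemma section_defect_p i (x : E i) : p i (section_defect x) = 0.
Proof. by rewrite /section_defect (linB (chain_p.1 _)) chain_section_p subrr. Qed.

Lemma section_defect_d_relative {i} (x : E i) :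
  relative_cycle (section_defect (dd E i (i - 1) x)) 0.
Proof.
split; first by rewrite section_defect_d dg_dd (lin0 (section_defect_lin _)).
by rewrite section_defect_p dd0.
Qed.

Definition defect_cycle {i} (x : E i) : E i :=
  section_defect x - l i (section_defect (dd E i (i - 1) x)) 0.

Lemma defect_cycle_d i (x : E i) : dd E i (i - 1) (defect_cycle x) = 0.
Proof.
rewrite /defect_cycle ddB section_defect_d lift_d ?subrr //.
exact: section_defect_d_relative.
Qed.

Lemma defect_cycle_p i (x : E i) : p i (defect_cycle x) = 0.
Proof.
rewrite /defect_cycle (linB (chain_p.1 _)) section_defect_p lift_p ?subrr //.
exact: section_defect_d_relative.
Qed.

Lemma defect_cycle_lin i : linear_fun R (@defect_cycle i).
Proof.
move=> a x y; rewrite /defect_cycle dg_d_lin !section_defect_lin.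
rewrite (lift_lin0 a (section_defect_d_relative x) (section_defect_d_relative y)).
by move: (section_defect x) (section_defect y) => u v; rewrite scalerBr opprD addrACA.
Qed.

Lemma defect_cycle_relative i j (x : E i) :
  relative_cycle (regrade E i (j - 1) (defect_cycle x)) (0 : B j).
Proof.
case: (eq_or_neq i (j - 1)) => [ei|ne]; first subst i.
  by rewrite regrade_id; split; rewrite ?dd0; [exact: defect_cycle_d | exact: defect_cycle_p].
by rewrite regrade_ne //; apply: relative_cycle0.
Qed.

Definition contraction i j (x : E i) : E j :=
  l j (regrade E i (j - 1) (defect_cycle x)) 0.

Lemma contraction_lin i j : linear_fun R (contraction i j).
Proof.
move=> a x y; rewrite /contraction defect_cycle_lin regrade_lin.
exact: lift_lin0 (defect_cycle_relative _ _ _) (defect_cycle_relative _ _ _).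
Qed.

Lemma contraction_shape i j (x : E i) : j != i + 1 -> contraction i j x = 0.
Proof.
move=> nj; rewrite /contraction regrade_ne ?lift00 //.
by apply: contra nj => /eqP ->; rewrite subrK.
Qed.

Lemma contraction_htpy i (x : E i) :
  chain_section (p i x) - x
  = dd E (i + 1) i (contraction i (i + 1) x) + contraction (i - 1) i (dd E i (i - 1) x).
Proof.
rewrite /contraction (lift_dd (defect_cycle_relative _ _ _)) !regrade_id.
rewrite regrade_regrade ?addrK // regrade_id.
rewrite {2}/defect_cycle dg_dd (lin0 (section_defect_lin _)) lift00 subr0.
by rewrite /defect_cycle subrK.
Qed.

Lemma split_htpy_equiv_of_lifts : degreewise_split_epi p /\ chain_htpy_equiv p.
Proof.
split=> [k|].
  by exists (@chain_section k); split; [apply: chain_section_lin | apply: chain_section_p].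
exists (@chain_section).
split; first by split; [apply: chain_section_lin | apply: chain_section_chain].
split.
  exists contraction; split; first exact: contraction_lin.
  by split; [apply: contraction_shape | apply: contraction_htpy].
exists (fun i j _ => 0); split; first by move=> i j a x y; rewrite scaler0 addr0.
by split=> // i x; rewrite /gcomp /gid chain_section_p subrr dd0 addr0.
Qed.

End SectionFromLifts.

Section LiftsFromHomotopyEquivalence.
Variables (q : gmap B E) (t : forall k, B k -> E k).
Variables (H : forall i j, E i -> E j) (G : forall i j, B i -> B j).
Hypotheses (chain_q : is_chain_map q) (lin_t : forall k, linear_fun R (t k)).
Hypothesis t_section : forall k y, p k (t k y) = y.
Hypotheses (lin_H : forall i j, linear_fun R (H i j)) (lin_G : forall i j, linear_fun R (G i j)).
Hypothesis htpy_H : forall i x,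
  q i (p i x) - x = dd E (i + 1) i (H i (i + 1) x) + H (i - 1) i (dd E i (i - 1) x).
Hypothesis htpy_G : forall i y,
  p i (q i y) - y = dd B (i + 1) i (G i (i + 1) y) + G (i - 1) i (dd B i (i - 1) y).

(* For a relative cycle [(z, b)], [e0 = q b - H z] satisfies [d e0 = z], and
   [c = b - p e0] is a cycle; since [p q c - c = d G c], correcting [e0] by
   [q c - d t G c] also gives [p e = b]. *)
Definition correction_cycle {k} (z : E (k - 1)) (b : B k) : B k :=
  b - p k (q k b) + p k (H (k - 1) k z).

Definition htpy_lift {k} (z : E (k - 1)) (b : B k) : E k :=
  q k b - H (k - 1) k z + q k (correction_cycle z b)
  - dd E (k + 1) k (t (k + 1) (G k (k + 1) (correction_cycle z b))).

Lemma correction_cycle_lin k : jointly_linear (@correction_cycle k).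
Proof.
apply: jointly_linearD; first apply: jointly_linearB.
- exact: jointly_linear_snd.
- exact: jointly_linear_comp (chain_p.1 k) (jointly_linear_snd (chain_q.1 k)).
- exact: jointly_linear_comp (chain_p.1 k) (jointly_linear_fst (lin_H _ _)).
Qed.

Lemma htpy_lift_lin k : jointly_linear (@htpy_lift k).
Proof.
have lin_c := @correction_cycle_lin k.
apply: jointly_linearB; first apply: jointly_linearD; first apply: jointly_linearB.
- exact: jointly_linear_snd (chain_q.1 k).
- exact: jointly_linear_fst (lin_H _ _).
- exact: jointly_linear_comp (chain_q.1 k) lin_c.
apply: jointly_linear_comp; first exact: dg_d_lin.
by apply: jointly_linear_comp (lin_t _) _; apply: jointly_linear_comp (lin_G _ _) lin_c.
Qed.

Section FixedDegree.
Variables (k : int) (z : E (k - 1)) (b : B k).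
Hypothesis zb : relative_cycle z b.

Lemma htpy_H_cycle : dd E k (k - 1) (H (k - 1) k z) = q (k - 1) (p (k - 1) z) - z.
Proof. by rewrite htpy_H subrK zb.1 (lin0 (lin_H _ _)) addr0. Qed.

Lemma correction_cycle_d : dd B k (k - 1) (correction_cycle z b) = 0.
Proof.
rewrite /correction_cycle ddD ddB -!chain_p.2 htpy_H_cycle -chain_q.2 -zb.2.
by rewrite (linB (chain_p.1 _)) addrA subrK subrr.
Qed.

Lemma htpy_lift_d : dd E k (k - 1) (htpy_lift z b) = z.
Proof.
rewrite /htpy_lift ddB dg_dd subr0 ddD ddB htpy_H_cycle -!chain_q.2.
by rewrite correction_cycle_d (lin0 (chain_q.1 _)) addr0 -zb.2 opprB addrCA subrr addr0.
Qed.

Lemma htpy_lift_p : p k (htpy_lift z b) = b.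
Proof.
have htpy_c := htpy_G k (correction_cycle z b).
rewrite correction_cycle_d (lin0 (lin_G _ _)) addr0 in htpy_c.
rewrite /htpy_lift (linB (chain_p.1 _)) chain_p.2 t_section -htpy_c.
rewrite (linD (chain_p.1 _)) (linB (chain_p.1 _)); set c := correction_cycle z b.
rewrite opprB [_ + (c - _)]addrC addrA addrAC subrK /c /correction_cycle.
by rewrite addrACA subrK subrr addr0.
Qed.
End FixedDegree.

Lemma htpy_lift_relative_cycle_lift n : relative_cycle_lift n (@htpy_lift n).
Proof.
split=> [z b zb|a z b z' b' _ _]; last exact: htpy_lift_lin.
by split; [apply: htpy_lift_d | apply: htpy_lift_p].
Qed.

End LiftsFromHomotopyEquivalence.

Lemma relative_cycle_lifts_iff :
  (forall n, exists l, relative_cycle_lift n l) <->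
  degreewise_split_epi p /\ chain_htpy_equiv p.
Proof.
split=> [lifts | [split_p [q [chain_q [[H [lin_H [_ htpy_H]]] [G [lin_G [_ htpy_G]]]]]]] n].
  have l_spec n := proj2_sig (constructive_indefinite_description _ (lifts n)).
  exact: split_htpy_equiv_of_lifts l_spec.
pose t k := proj1_sig (constructive_indefinite_description _ (split_p k)).
have t_spec k : linear_fun R (t k) /\ forall y, p k (t k y) = y.
  exact: proj2_sig (constructive_indefinite_description _ (split_p k)).
exists (htpy_lift q t H G).
exact: (htpy_lift_relative_cycle_lift q t H G chain_q (fun k => (t_spec k).1)
          (fun k => (t_spec k).2) lin_H lin_G htpy_H htpy_G n).
Qed.

End RelativeCycles.

End Lifting.

Arguments relative_cycle_lifts_iff {R E B p}.
Arguments enriched_rlp_relative_cycle_lift {R E B p}.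

Theorem lemma2p9 (R : comPzRingType) (E B : DGMod R) (p : gmap E B)
  (hp : is_chain_map p) :
  (forall n : int, enriched_rlp (@sphere_incl R n) p) <->
  (degreewise_split_epi p /\ chain_htpy_equiv p).
Proof.
rewrite -(relative_cycle_lifts_iff hp).
by split=> lifts n; apply/(enriched_rlp_relative_cycle_lift hp); apply: lifts.
Qed.
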